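(* Let $M$ be a connected matroid on $[n]$, $\mathcal G$ a building set of $\mathcal L_M$, and $\mathcal S$ a nested set of $\mathcal G$ with $[n]\in\mathcal S$. For $G\in\mathcal S$ let $G^-$ be the join (closure of the union) of the maximal elements of $\{H\in\mathcal S: H\subsetneq G\}$, with $G^-=\emptyset$ if this set is empty. Let $w$ be any vector in the relative interior of the cone $\mathbb R_{\ge0}\{v_G:G\in\mathcal S\}$. Then $$M_w\;=\;\bigoplus_{G\in\mathcal S} M[G^-,G].$$
   Context: A matroid $M$ of rank $r$ on $[n]$ is given by its bases; for $w\in\mathbb R^n$, $M_w$ is the matroid on $[n]$ whose bases are the bases $\sigma$ of $M$ maximizing $\sum_{i\in\sigma}w_i$. $\mathcal L_M$ is the lattice of flats (least element $\emptyset$ as $M$ is connected hence loopless, greatest $[n]$). For flats $F\subseteq G$, $M[F,G]$ is the matroid on $G\setminus F$ obtained by restricting $M$ to $G$ and contracting $F$: its bases are the sets $\tau\setminus F$ where $\tau\subseteq G$ is a maximal independent subset of $G$ containing a maximal independent subset of $F$. $v_G\in\{0,1\}^n$ is the incidence vector of $G$. $\mathcal G\subseteq\mathcal L_M\setminus\{\emptyset\}$ is a building set if for every flat $X\ne\emptyset$, with $G_1,\dots,G_k$ the maximal elements of $\mathcal G$ contained in $X$, the join map $\prod_j[\emptyset,G_j]\to[\emptyset,X]$ is a poset isomorphism ($[A,B]$ denotes the interval of flats between $A$ and $B$); $[n]$ lies in every building set since $M$ is connected. $\mathcal S\subseteq\mathcal G$ is nested if the join of any $t\ge 2$ pairwise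 incomparable elements of $\mathcal S$ is not in $\mathcal G$. *)

From HB Require Import structures.
From mathcomp Require Import all_boot all_order all_algebra.
From mathcomp Require Import reals.
Set Implicit Arguments. Unset Strict Implicit. Unset Printing Implicit Defensive.
Import Order.TTheory GRing.Theory Num.Theory.

Section Matroids.
Variable n : nat.
Local Notation E := 'I_n.
Local Notation sets := {set {set E}}.

Definition is_matroid (B : sets) : Prop :=
  B != set0 /\
  forall B1 B2, B1 \in B -> B2 \in B -> forall x, x \in B1 :\: B2 ->
    exists2 y, y \in B2 :\: B1 & (y |: (B1 :\ x)) \in B.

Definition indep (B : sets) (I : {set E}) : Prop := exists2 C, C \in B & I \subset C.

Definition rk (B : sets) (A : {set E}) : nat := \max_(C in B) #|A :&: C|.

Definition cl (B : sets) (A : {set E}) : {set E} := [set x | rk B (x |: A) == rk B A].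
Definition flat (B : sets) (F : {set E}) : Prop := cl B F = F.

Definition connected (B : sets) : Prop :=
  forall A : {set E}, A != set0 -> A != setT -> rk B A + rk B (~: A) <> rk B setT.

Definition maxel (P : sets) : sets :=
  [set G in P | [forall H in P, ~~ (G \proper H)]].

Definition join (B : sets) (P : sets) : {set E} := cl B (\bigcup_(H in P) H).

(* elements of the product of intervals prod_{G in Mx} [emptyset, G],
   encoded as finite functions vanishing outside Mx *)
Definition prod_elt (B : sets) (Mx : sets) (f : {ffun {set E} -> {set E}}) : Prop :=
  forall G, (G \in Mx -> flat B (f G) /\ f G \subset G) /\ (G \notin Mx -> f G = set0).

Definition join_map (B : sets) (Mx : sets) (f : {ffun {set E} -> {set E}}) : {set E} :=
  cl B (\bigcup_(G in Mx) f G).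

(* the join map prod_{G in Mx} [emptyset,G] -> [emptyset,X] is a poset isomorphism *)
Definition join_iso (B : sets) (Mx : sets) (X : {set E}) : Prop :=
  [/\ forall f, prod_elt B Mx f -> flat B (join_map B Mx f) /\ join_map B Mx f \subset X,
      forall F, flat B F -> F \subset X -> exists2 f, prod_elt B Mx f & join_map B Mx f = F
    & forall f g, prod_elt B Mx f -> prod_elt B Mx g ->
        ((forall G, G \in Mx -> f G \subset g G) <-> join_map B Mx f \subset join_map B Mx g)].

Definition building_set (B : sets) (Gs : sets) : Prop :=
  (forall G, G \in Gs -> flat B G /\ G != set0) /\
  forall X, flat B X -> X != set0 ->
    join_iso B (maxel [set G in Gs | G \subset X]) X.

Definition nested (B : sets) (Gs S : sets) : Prop :=
  S \subset Gs /\
  forall T : sets, T \subset S -> 2 <= #|T| ->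
    (forall H1 H2, H1 \in T -> H2 \in T -> H1 != H2 -> ~~ (H1 \subset H2)) ->
    join B T \notin Gs.

Definition Gminus (B : sets) (S : sets) (G : {set E}) : {set E} :=
  let P := [set H in S | H \proper G] in
  if P == set0 then set0 else join B (maxel P).

(* bases of M[F,G] (a matroid on G \ F) *)
Definition maxindep_in (B : sets) (A I : {set E}) : Prop :=
  [/\ I \subset A, indep B I & forall J : {set E}, I \subset J -> J \subset A -> indep B J -> J = I].

Definition minor_bases (B : sets) (F G : {set E}) : {set E} -> Prop :=
  fun b => exists tau, [/\ maxindep_in B G tau,
                          (exists2 s, maxindep_in B F s & s \subset tau)
                        & b = tau :\: F].

Section Weights.
Variable R : realType.
Local Open Scope ring_scope.

Definition wsum (w : 'rV[R]_n) (A : {set E}) : R := \sum_(i in A) w 0 i.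
Definition Mw_bases (B : sets) (w : 'rV[R]_n) : {set E} -> Prop :=
  fun b => b \in B /\ forall C, C \in B -> wsum w C <= wsum w b.

Definition incv (G : {set E}) : 'rV[R]_n := \row_i (i \in G)%:R.

Definition in_cone (S : sets) (u : 'rV[R]_n) : Prop :=
  exists lam : {ffun {set E} -> R},
    (forall G, G \in S -> 0 <= lam G) /\ u = \sum_(G in S) lam G *: incv G.

Definition in_aff (C : 'rV[R]_n -> Prop) (u : 'rV[R]_n) : Prop :=
  exists (k : nat) (c : 'I_k -> 'rV[R]_n) (mu : 'I_k -> R),
    [/\ forall j, C (c j), \sum_j mu j = 1 & u = \sum_j mu j *: c j].

Definition in_relint (C : 'rV[R]_n -> Prop) (w : 'rV[R]_n) : Prop :=
  C w /\ exists2 eps : R, 0 < eps &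
    forall u, in_aff C u -> (forall i, `|u 0 i - w 0 i| < eps) -> C u.

End Weights.
End Matroids.

From HB Require Import structures.
From mathcomp Require Import all_boot all_order all_algebra.
From mathcomp Require Import reals.
From mathcomp Require Import zify lra.
From Stdlib Require Import Classical.
Import Order.TTheory GRing.Theory Num.Theory.
Set Implicit Arguments. Unset Strict Implicit. Unset Printing Implicit Defensive.

(* Two incomparable members G, H of the nested set are disjoint: a common element
   x would put cl{x} into two different factors of the building-set decomposition
   of G \/ H, which its injectivity forbids unless x is a loop. Hence each x lies in
   G \ G^- for exactly one G in S, the least member of S containing x. The same
   injectivity shows that bases of the members of an antichain of S have an
   independent union. By induction along S, a basis b meets every G in S in a
   basis of G iff each (b :&: G) \ G^- is a basis of M[G^-, G], and such b exist.
   For w = sum lam_G v_G the weight of a basis b is sum lam_G |b :&: G| <=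
   sum lam_G rk G, with equality for these b; since w is in the relative interior
   of the cone, w - d v_G stays in the cone for small d > 0, so a basis of maximal
   weight must meet G in rk G elements. *)

Section Matroid.
Variables (n : nat) (B : {set {set 'I_n}}).
Hypothesis HB : is_matroid B.
Implicit Types (A I J C F G : {set 'I_n}) (x y : 'I_n).

Lemma indepS I J : indep B J -> I \subset J -> indep B I.
Proof. by case=> C CB JC IJ; exists C => //; apply: subset_trans JC. Qed.

Lemma base_indep C : C \in B -> indep B C.
Proof. by move=> CB; exists C. Qed.

Lemma leq_card_bases C1 C2 : C1 \in B -> C2 \in B -> #|C1| <= #|C2|.
Proof.
move: {2}#|C1 :\: C2| (erefl #|C1 :\: C2|) => k.
elim: k C1 => [|k IH] C1 Hk C1B C2B.
  by apply: subset_leq_card; rewrite -setD_eq0 -cards_eq0; apply/eqP.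
have /set0Pn [x xD] : C1 :\: C2 != set0 by rewrite -card_gt0 Hk.
have [y yD yB] := HB.2 _ _ C1B C2B x xD.
move: xD yD; rewrite !inE => /andP [xC2 xC1] /andP [yC1 yC2].
have card_yC1 : #|y |: (C1 :\ x)| = #|C1|.
  by rewrite cardsU1 (cardsD1 x C1) xC1 !inE (negbTE yC1) andbF.
rewrite -card_yC1; apply: IH => //.
have -> : (y |: (C1 :\ x)) :\: C2 = (C1 :\: C2) :\ x.
  apply/setP => z; rewrite !inE.
  by case: (eqVneq z y) => [->|_]; [rewrite yC2 !andbF | rewrite /= andbCA].
by move: Hk; rewrite (cardsD1 x (C1 :\: C2)) !inE xC2 xC1 /= add1n => -[].
Qed.

Lemma eq_card_bases C1 C2 : C1 \in B -> C2 \in B -> #|C1| = #|C2|.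
Proof. by move=> C1B C2B; apply/eqP; rewrite eqn_leq !leq_card_bases. Qed.

Lemma leq_card_rk C A : C \in B -> #|A :&: C| <= rk B A.
Proof. by move=> CB; rewrite /rk (bigD1 C) //= leq_maxl. Qed.

Lemma rk_attained A : exists2 C, C \in B & rk B A = #|A :&: C|.
Proof.
have /set0Pn [C0 C0B] := HB.1.
have : 0 < #|B| by rewrite card_gt0; apply/set0Pn; exists C0.
by case/(eq_bigmax_cond (fun C => #|A :&: C|)) => C CB e; exists C; rewrite // /rk e.
Qed.

Lemma indep0 : indep B set0.
Proof. by have [C CB _] := rk_attained set0; exists C; rewrite ?sub0set. Qed.

Lemma rk_leq_card A : rk B A <= #|A|.
Proof. by have [C _ ->] := rk_attained A; rewrite subset_leq_card ?subsetIl. Qed.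

Lemma rkS A A' : A \subset A' -> rk B A <= rk B A'.
Proof.
move=> AA'; have [C CB ->] := rk_attained A.
by apply: leq_trans (leq_card_rk _ CB); rewrite subset_leq_card ?setSI.
Qed.

Lemma rk0 : rk B set0 = 0.
Proof. by apply/eqP; rewrite -leqn0 -(cards0 'I_n) rk_leq_card. Qed.

Lemma indep_leq_rk I A : indep B I -> I \subset A -> #|I| <= rk B A.
Proof.
case=> C CB IC IA; apply: leq_trans (leq_card_rk A CB).
by rewrite subset_leq_card // subsetI IA IC.
Qed.

Lemma rk_indep I : indep B I -> rk B I = #|I|.
Proof. by move=> hI; apply/eqP; rewrite eqn_leq rk_leq_card indep_leq_rk. Qed.

Lemma rk_card_indep A : #|A| <= rk B A -> indep B A.
Proof.
have [C CB ->] := rk_attained A => cardA; exists C => //.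
suff <- : A :&: C = A by apply: subsetIr.
by apply/eqP; rewrite eqEcard subsetIl cardA.
Qed.

Definition maxindep A I :=
  [/\ I \subset A, indep B I & forall y, y \in A -> y \notin I -> ~ indep B (y |: I)].

Lemma maxindepP A I : maxindep A I <-> maxindep_in B A I.
Proof.
split=> [[IA hI hmax]|[IA hI hmax]].
  split=> // J IJ JA hJ; apply/eqP; rewrite eqEsubset IJ andbT.
  apply/negPn/negP => /subsetPn [y yJ yI].
  by apply: (hmax y (subsetP JA _ yJ) yI); apply: indepS hJ _; rewrite subUset sub1set yJ.
split=> // y yA yI hyI.
have := hmax (y |: I) (subsetUr _ _); rewrite subUset sub1set yA IA => /(_ isT hyI) e.
by move: yI; rewrite -e setU11.
Qed.

(* J \ I lies in C2 \ C1 by maximality of I, and C1 \ C2 in I \ J by the exchange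
   axiom, while #|C1 :\: C2| = #|C2 :\: C1|. *)
Lemma maxindep_card_ge_covered A I J C1 C2 : maxindep A I -> I \subset C1 -> C1 \in B ->
  J \subset A -> J \subset C2 -> C2 \in B -> C2 \subset J :|: C1 -> #|J| <= #|I|.
Proof.
move=> [_ _ hmax] IC1 C1B JA JC2 C2B C2JC1.
have JI : J :\: I \subset C2 :\: C1.
  apply/subsetP => x; rewrite !inE => /andP [xI xJ].
  rewrite (subsetP JC2 _ xJ) andbT; apply/negP => xC1.
  by apply: (hmax x (subsetP JA _ xJ) xI); exists C1; rewrite // subUset sub1set xC1.
have C1I : C1 :\: C2 \subset I :\: J.
  apply/subsetP => z zD; have := zD; rewrite !inE => /andP [zC2 zC1].
  rewrite (contra (subsetP JC2 z)) //=; apply/negPn/negP => zI.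
  have [y] := HB.2 _ _ C1B C2B z zD; rewrite !inE => /andP [yC1 yC2] yB.
  have yJ : y \in J by move: (subsetP C2JC1 _ yC2); rewrite !inE (negbTE yC1) orbF.
  apply: (hmax y (subsetP JA _ yJ) (contra (subsetP IC1 y) yC1)).
  exists (y |: (C1 :\ z)) => //; apply: setUS; apply/subsetP => t tI.
  by rewrite !inE (subsetP IC1 _ tI) andbT; apply: contraNneq zI => <-.
have : #|C2 :\: C1| = #|C1 :\: C2| by rewrite !cardsD (eq_card_bases C2B C1B) setIC.
have := subset_leq_card JI; have := subset_leq_card C1I.
have := cardsID I J; have := cardsID J I; rewrite setIC; lia.
Qed.

(* Exchanges inside C2 reduce to the case C2 \subset J :|: C1. *)
Lemma maxindep_card_ge A I J : maxindep A I -> J \subset A -> indep B J -> #|J| <= #|I|.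
Proof.
move=> mI JA [C2 C2B JC2]; have [_ [C1 C1B IC1] _] := mI.
move: {2}#|C2 :\: (J :|: C1)| (leqnn #|C2 :\: (J :|: C1)|) => k.
elim: k C2 C2B JC2 => [|k IH] C2 C2B JC2 hk;
  have covered := maxindep_card_ge_covered mI IC1 C1B JA JC2 C2B.
  by apply: covered; rewrite -setD_eq0 -cards_eq0 -leqn0.
have [/eqP|/set0Pn [y]] := eqVneq (C2 :\: (J :|: C1)) set0.
  by rewrite setD_eq0; apply: covered.
rewrite !inE negb_or => /andP [/andP [yJ yC1] yC2].
have yD : y \in C2 :\: C1 by rewrite !inE yC1 yC2.
have [x] := HB.2 _ _ C2B C1B y yD; rewrite !inE => /andP [xC2 xC1] xB.
apply: (IH _ xB).
  apply/subsetP => t tJ; rewrite !inE (subsetP JC2 _ tJ) andbT orbC.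
  by apply/orP; left; apply: contraNneq yJ => <-.
have : (x |: (C2 :\ y)) :\: (J :|: C1) \subset (C2 :\: (J :|: C1)) :\ y.
  apply/subsetP => t; rewrite !inE; case: eqP => [->|_ /=]; first by rewrite xC1 !orbT.
  by case/andP=> -> /andP [-> ->].
move/subset_leq_card; move: hk.
by rewrite (cardsD1 y (C2 :\: (J :|: C1))) !inE yC2 (negbTE yJ) (negbTE yC1); lia.
Qed.

Lemma card_maxindep A I : maxindep A I -> #|I| = rk B A.
Proof.
move=> mI; have [IA hI _] := mI.
apply/eqP; rewrite eqn_leq indep_leq_rk //=.
have [C CB ->] := rk_attained A.
apply: maxindep_card_ge mI (subsetIl _ _) _.
exact: indepS (base_indep CB) (subsetIr _ _).
Qed.

Lemma maxindep_card A I : I \subset A -> indep B I -> #|I| = rk B A -> maxindep A I.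
Proof.
move=> IA hI cardI; split=> // y yA yI hy.
have := indep_leq_rk hy (_ : y |: I \subset A).
by rewrite subUset sub1set yA IA cardsU1 yI cardI ltnn => /(_ isT).
Qed.

Lemma maxindep_id I : indep B I -> maxindep I I.
Proof. by move=> hI; split=> // y ->. Qed.

Lemma maxindep_extend A I : I \subset A -> indep B I ->
  exists2 I' : {set 'I_n}, I \subset I' & maxindep A I'.
Proof.
move: {2}#|A :\: I| (leqnn #|A :\: I|) => k.
elim: k I => [|k IH] I hk IA hI.
  exists I => //; split=> // y yA yI.
  by move: hk; rewrite leqn0 cards_eq0 setD_eq0 => /subsetP /(_ _ yA); rewrite (negbTE yI).
have [[y [yA yI hy]]|hno] :=
  classic (exists y, [/\ y \in A, y \notin I & indep B (y |: I)]); last first.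
  by exists I => //; split=> // y yA yI hy; apply: hno; exists y.
have [I' yII' mI'] : exists2 I' : {set 'I_n}, y |: I \subset I' & maxindep A I'.
  apply: IH hy; last by rewrite subUset sub1set yA IA.
  move: hk; rewrite (cardsD1 y (A :\: I)) !inE yA yI add1n ltnS; apply: leq_trans.
  by apply: subset_leq_card; apply/subsetP => t; rewrite !inE negb_or andbA.
by exists I' => //; apply: subset_trans yII'; apply: subsetUr.
Qed.

Lemma maxindep_exists A : exists I, maxindep A I.
Proof. by have [I _ ?] := maxindep_extend (sub0set A) indep0; exists I. Qed.

Lemma maxindep_exists_minor F G : F \subset G -> exists t, minor_bases B F G t.
Proof.
move=> FG; have [s ms] := maxindep_exists F; have [sF hs _] := ms.
have [tau stau mtau] := maxindep_extend (subset_trans sF FG) hs.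
by exists (tau :\: F), tau; split; [apply/maxindepP | exists s => //; apply/maxindepP |].
Qed.

Lemma subset_cl A : A \subset cl B A.
Proof. by apply/subsetP => x xA; rewrite inE; apply/eqP/congr1/setUidPr; rewrite sub1set. Qed.

Lemma mem_cl1 x : x \in cl B [set x].
Proof. by apply: (subsetP (subset_cl _)); rewrite inE. Qed.

Lemma cl_maxindep A I x : maxindep A I -> x \notin I -> x \in cl B A <-> ~ indep B (x |: I).
Proof.
move=> mI xI; have cardI := card_maxindep mI; have [IA hI hmax] := mI.
split=> [|hx].
  rewrite inE => /eqP cardxA hx; have := indep_leq_rk hx (setUS [set x] IA).
  by rewrite cardsU1 xI cardxA -cardI ltnn.
have [xA|xA] := boolP (x \in A); first exact: subsetP (subset_cl A) x xA.
suff /card_maxindep : maxindep (x |: A) I by rewrite inE -cardI => ->.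
split=> //; first exact: subset_trans IA (subsetUr _ _).
by move=> y; rewrite !inE => /orP [/eqP -> //|]; apply: hmax.
Qed.

Lemma clS A A' : A \subset A' -> cl B A \subset cl B A'.
Proof.
move=> AA'; apply/subsetP => x xclA.
have [xA'|xA'] := boolP (x \in A'); first exact: subsetP (subset_cl A') x xA'.
have [I mI] := maxindep_exists A; have [IA hI _] := mI.
have [I' II' mI'] := maxindep_extend (subset_trans IA AA') hI.
have xI : x \notin I by apply: contra xA' => /(subsetP IA) /(subsetP AA').
have xI' : x \notin I' by have [I'A' _ _] := mI'; apply: contra xA' => /(subsetP I'A').
apply/(cl_maxindep mI' xI') => hx.
exact: (cl_maxindep mI xI).1 xclA (indepS hx (setUS _ II')).
Qed.

Lemma rk_cl A : rk B (cl B A) = rk B A.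
Proof.
have [I mI] := maxindep_exists A; have [IA hI _] := mI.
rewrite -(card_maxindep mI); apply/esym/card_maxindep.
split=> //; first exact: subset_trans IA (subset_cl A).
by move=> y ycl yI; apply/(cl_maxindep mI yI).
Qed.

Lemma flat_cl A : flat B (cl B A).
Proof.
apply/eqP; rewrite /flat eqEsubset subset_cl andbT; apply/subsetP => x.
rewrite !inE rk_cl => /eqP e.
by rewrite eqn_leq -{1}e !rkS ?setUS ?subset_cl ?subsetUr.
Qed.

Lemma cl_sub_flat A F : flat B F -> A \subset F -> cl B A \subset F.
Proof. by move=> flatF AF; rewrite -flatF clS. Qed.

Lemma maxindep_spans A I : maxindep A I -> A \subset cl B I.
Proof.
move=> mI; have [IA hI hmax] := mI; apply/subsetP => y yA.
have [yI|yI] := boolP (y \in I); first exact: subsetP (subset_cl I) y yI.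
by apply/(cl_maxindep (maxindep_id hI) yI); apply: hmax.
Qed.

Lemma maxindep_of_spans A I : I \subset A -> indep B I -> A \subset cl B I -> maxindep A I.
Proof.
move=> IA hI Acl; split=> // y yA yI.
exact: (cl_maxindep (maxindep_id hI) yI).1 (subsetP Acl y yA).
Qed.

Lemma maxindep_setT_base I : maxindep setT I -> I \in B.
Proof.
move=> mI; have [_ [C CB IC] _] := mI.
suff -> : I = C by [].
apply/eqP; rewrite eqEcard IC (card_maxindep mI) /=.
by have := leq_card_rk setT CB; rewrite setTI.
Qed.

Lemma indep_notin_cl I x : indep B I -> x \in I -> x \notin cl B (I :\ x).
Proof.
move=> hI xI; apply/negP => /(cl_maxindep (maxindep_id (indepS hI (subsetDl I _)))).
by rewrite !inE eqxx setD1K //; apply.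
Qed.

Lemma notin_cl_indep I : (forall x, x \in I -> x \notin cl B (I :\ x)) -> indep B I.
Proof.
move=> hI; have [J mJ] := maxindep_exists I; have [JI hJ hmax] := mJ.
suff -> : I = J by [].
apply/eqP; rewrite eqEsubset JI andbT; apply/subsetP => x xI.
apply/negPn/negP => xJ.
have JIx : J \subset I :\ x.
  by apply/subsetP => t tJ; rewrite !inE (subsetP JI _ tJ) andbT; apply: contraNneq xJ => <-.
have xclJ : x \in cl B J by apply/(cl_maxindep (maxindep_id hJ) xJ); apply: hmax.
by move: (hI x xI); rewrite (subsetP (clS JIx) x xclJ).
Qed.

Lemma mem_cl1_sym x y : y \in cl B [set x] -> y \notin cl B set0 -> x \in cl B [set y].
Proof.
rewrite !inE rk0 setU0 => /eqP rkxy rky.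
have rky1 : rk B [set y] = 1.
  by apply/eqP; rewrite eqn_leq lt0n rky andbT -(cards1 y) rk_leq_card.
have rkx1 : rk B [set x] <= 1 by rewrite -(cards1 x) rk_leq_card.
by rewrite setUC rkxy rky1 eqn_leq rkx1 -rky1 -rkxy rkS ?subsetUl.
Qed.

Lemma loop_connected x : connected B -> x \in cl B set0 -> [set x] = setT.
Proof.
move=> conB; rewrite inE rk0 setU0 => /eqP rkx0.
apply/eqP/negPn/negP => xT; apply: (conB [set x]) => //.
  by apply/set0Pn; exists x; rewrite inE.
rewrite rkx0; apply/eqP; rewrite eqn_leq rkS ?subsetT //=.
have [C CB ->] := rk_attained setT.
apply: leq_trans (leq_card_rk _ CB); apply: subset_leq_card; apply/subsetP => t.
rewrite !inE /= => tC; rewrite tC andbT; apply: contraTneq tC => ->.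
have := leq_card_rk [set x] CB; rewrite rkx0 leqn0 cards_eq0 => /eqP /setP /(_ x).
by rewrite !inE eqxx => /negbT.
Qed.

Lemma minor_bases_sub F G t : minor_bases B F G t -> t \subset G :\: F.
Proof. by case=> tau [[tauG _ _] _ ->]; apply: setSD. Qed.

Lemma minor_bases_maxindep F G tau :
  maxindep G tau -> maxindep F (tau :&: F) -> minor_bases B F G (tau :\: F).
Proof.
move=> mtau mtauF; exists tau; split=> //; first exact/maxindepP.
by exists (tau :&: F); [apply/maxindepP | apply: subsetIl].
Qed.

Lemma maxindep_minor_union F G U t :
  F \subset G -> maxindep F U -> minor_bases B F G t -> maxindep G (U :|: t).
Proof.
move=> FG mU [tau [/maxindepP mtau [s /maxindepP ms stau] ->]].
have [UF _ _] := mU; have [tauG htau _] := mtau; have [sF _ _] := ms.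
have card_tauF : #|tau :&: F| = rk B F.
  have htauF := indepS htau (subsetIl tau F).
  apply/eqP; rewrite eqn_leq indep_leq_rk ?subsetIr //=.
  by rewrite -(card_maxindep ms) subset_leq_card // subsetI stau sF.
have card_Ut : #|U :|: (tau :\: F)| = rk B G.
  rewrite cardsU (_ : U :&: _ = set0) ?cards0 ?subn0; last first.
    by apply/setP => x; rewrite !inE; case: (boolP (x \in U)) => // /(subsetP UF) ->.
  by rewrite (card_maxindep mU) -card_tauF cardsID (card_maxindep mtau).
have UtG : U :|: (tau :\: F) \subset G.
  by rewrite subUset (subset_trans UF FG) (subset_trans (subsetDl _ _) tauG).
apply: maxindep_card => //; apply: rk_card_indep.
rewrite card_Ut -(card_maxindep mtau) -(rk_indep htau) -(rk_cl (U :|: _)).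
apply: rkS; apply/subsetP => x xtau.
have [xF|xF] := boolP (x \in F).
  exact: subsetP (clS (subsetUl U _)) x (subsetP (maxindep_spans mU) x xF).
by apply: (subsetP (subset_cl _)); rewrite !inE xF xtau orbT.
Qed.

Definition adapted_basis (S : {set {set 'I_n}}) b :=
  b \in B /\ forall G, G \in S -> #|b :&: G| = rk B G.
End Matroid.

Section MaximalElements.
Variable n : nat.
Implicit Types (P T : {set {set 'I_n}}) (G H K : {set 'I_n}).

Definition antichain T :=
  forall H1 H2, H1 \in T -> H2 \in T -> H1 != H2 -> ~~ (H1 \subset H2).

Lemma antichainS T T' : T' \subset T -> antichain T -> antichain T'.
Proof. by move=> /subsetP sT'T hT H1 H2 /sT'T h1 /sT'T h2; apply: hT. Qed.

Lemma maxel_sub P : maxel P \subset P.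
Proof. by apply/subsetP => G; rewrite inE => /andP []. Qed.

Lemma maxel_antichain P : antichain (maxel P).
Proof.
move=> G H; rewrite inE => /andP [_ /forallP maxG] /(subsetP (maxel_sub P)) HP neGH.
by move: (maxG H); rewrite HP properEneq neGH.
Qed.

Lemma maxel_above P G : G \in P -> exists2 K, K \in maxel P & G \subset K.
Proof.
move=> GP; have GPG : (G \in P) && (G \subset G) by rewrite GP subxx.
case: (@arg_maxnP _ G (fun K => (K \in P) && (G \subset K)) (fun K => #|K|) GPG).
move=> K /andP [KP GK] maxK; exists K => //.
rewrite inE KP; apply/forallP => H; apply/implyP => HP; apply/negP => KH.
have := maxK H; rewrite HP (subset_trans GK (proper_sub KH)) => /(_ isT) /=.
by rewrite leqNgt proper_card.
Qed.

Lemma card_le1_set T : #|T| <= 1 -> T = set0 \/ exists H, T = [set H].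
Proof.
case: (posnP #|T|) => [/eqP|T0 T1]; first by rewrite cards_eq0 => /eqP; left.
by right; apply/cards1P; rewrite eqn_leq T1.
Qed.
End MaximalElements.

Section Join.
Variables (n : nat) (B : {set {set 'I_n}}).
Hypothesis HB : is_matroid B.
Implicit Types (T : {set {set 'I_n}}) (H Y : {set 'I_n}).

Lemma join_sub_flat T Y : flat B Y -> (forall H, H \in T -> H \subset Y) -> join B T \subset Y.
Proof. by move=> flatY TY; apply: cl_sub_flat => //; apply/bigcupsP. Qed.

Lemma sub_join T H : H \in T -> H \subset join B T.
Proof. by move=> HT; apply: subset_trans (subset_cl _ _); apply: bigcup_sup HT. Qed.

Lemma join_set0 : join B set0 = cl B set0.
Proof. by rewrite /join big_set0. Qed.

Lemma join_set1 H : flat B H -> join B [set H] = H.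
Proof. by rewrite /join big_set1. Qed.
End Join.

Section NestedSet.
Variables (n : nat) (B Gs S : {set {set 'I_n}}).
Hypotheses (HB : is_matroid B) (conB : connected B).
Hypotheses (HGs : building_set B Gs) (HS : nested B Gs S).
Implicit Types (T : {set {set 'I_n}}) (G H K X Y : {set 'I_n}) (x : 'I_n).

Lemma nested_building G : G \in S -> G \in Gs.
Proof. by case: HS => /subsetP h _ /h. Qed.

Lemma building_flat G : G \in Gs -> flat B G.
Proof. by case: HGs => h _ /h []. Qed.

Lemma building_neq0 G : G \in Gs -> G != set0.
Proof. by case: HGs => h _ /h []. Qed.

Lemma nested_flat G : G \in S -> flat B G.
Proof. by move/nested_building/building_flat. Qed.

Lemma nested_loop_setT x G : x \in cl B set0 -> G \in S -> G = setT.
Proof.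
move=> x0 GS; have x1 := loop_connected HB conB x0.
have /set0Pn [y yG] := building_neq0 (nested_building GS).
apply/eqP; rewrite eqEsubset subsetT -x1 sub1set.
by move: (in_setT y); rewrite -x1 => /set1P <-.
Qed.

Lemma join_nested_notin T : T \subset S -> 1 < #|T| -> antichain T -> join B T \notin Gs.
Proof. by case: HS => _ h TS T2 antiT; apply: h. Qed.

Definition factors X := maxel [set G in Gs | G \subset X].

Lemma factor_building X K : K \in factors X -> K \in Gs.
Proof. by move/(subsetP (maxel_sub _)); rewrite inE => /andP []. Qed.

Lemma factor_sub X K : K \in factors X -> K \subset X.
Proof. by move/(subsetP (maxel_sub _)); rewrite inE => /andP []. Qed.

Lemma factor_flat X K : K \in factors X -> flat B K.
Proof. by move/factor_building/building_flat. Qed.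

Lemma factor_above X H : H \in Gs -> H \subset X -> exists2 K, K \in factors X & H \subset K.
Proof. by move=> HGs' HX; apply: maxel_above; rewrite inE HGs' HX. Qed.

Lemma factors_iso X x : flat B X -> x \in X -> join_iso B (factors X) X.
Proof. by move=> flatX xX; apply: HGs.2 => //; apply/set0Pn; exists x. Qed.

Lemma factors_join_iso T K : K \in factors (join B T) ->
  join_iso B (factors (join B T)) (join B T).
Proof.
move=> KX; have /set0Pn [x xK] := building_neq0 (factor_building KX).
exact: factors_iso (flat_cl HB _) (subsetP (factor_sub KX) x xK).
Qed.

Lemma join_nested_factor_above T H : T \subset S -> H \in T ->
  exists2 K, K \in factors (join B T) & H \subset K.
Proof.
by move=> TS HT; apply: factor_above (nested_building (subsetP TS _ HT)) (sub_join B HT).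
Qed.

Lemma factor_join_not_upper T K : T \subset S -> 1 < #|T| -> antichain T ->
  K \in factors (join B T) -> ~ (forall H, H \in T -> H \subset K).
Proof.
move=> TS T2 antiT KX TK; have /negP := join_nested_notin TS T2 antiT; apply.
suff -> : join B T = K by apply: factor_building KX.
by apply/eqP; rewrite eqEsubset (join_sub_flat HB (factor_flat KX) TK) (factor_sub KX).
Qed.

Lemma factors_le X f g : join_iso B (factors X) X ->
  prod_elt B (factors X) f -> prod_elt B (factors X) g ->
  join_map B (factors X) f \subset join_map B (factors X) g ->
  forall K, K \in factors X -> f K \subset g K.
Proof. by case=> _ _ h hf hg /(h _ _ hf hg). Qed.

Definition single_factor X K0 Y : {ffun {set 'I_n} -> {set 'I_n}} :=
  [ffun K => if K \in factors X then (if K == K0 then Y else cl B set0) else set0].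

Lemma single_factor_elt X K0 Y : flat B Y -> Y \subset K0 ->
  prod_elt B (factors X) (single_factor X K0 Y).
Proof.
move=> flatY YK0 K; rewrite ffunE; split=> [KX|/negbTE -> //]; rewrite KX.
case: eqP => [-> //|_]; split; first exact: flat_cl.
by apply: (cl_sub_flat HB (factor_flat KX)); rewrite sub0set.
Qed.

Lemma join_map_single_factor X K0 Y : K0 \in factors X -> flat B Y ->
  join_map B (factors X) (single_factor X K0 Y) = Y.
Proof.
move=> K0X flatY; rewrite /join_map -[RHS]flatY; congr (cl B _).
apply/eqP; rewrite eqEsubset; apply/andP; split.
  apply/bigcupsP => K KX; rewrite ffunE KX; case: eqP => // _.
  by rewrite -flatY clS // sub0set.
by apply: (bigcup_max K0) => //; rewrite ffunE K0X eqxx.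
Qed.

(* Injectivity of the building-set isomorphism, seen on one factor. *)
Lemma single_factor_le X K0 Y g : join_iso B (factors X) X -> K0 \in factors X ->
  flat B Y -> Y \subset K0 -> prod_elt B (factors X) g ->
  Y \subset join_map B (factors X) g -> Y \subset g K0.
Proof.
move=> isoX K0X flatY YK0 hg Yg.
have := factors_le isoX (single_factor_elt X flatY YK0) hg.
by rewrite join_map_single_factor // => /(_ Yg K0 K0X); rewrite ffunE K0X eqxx.
Qed.

Lemma card_factor_lower T K : T \subset S -> 1 < #|T| -> antichain T ->
  K \in factors (join B T) -> #|[set H in T | H \subset K]| < #|T|.
Proof.
move=> TS T2 antiT KX; apply: proper_card; rewrite properE.
apply/andP; split; first by apply/subsetP => H; rewrite inE => /andP [].
apply/negP => /subsetP TTK; apply: (factor_join_not_upper TS T2 antiT KX) => H HT.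
by move: (TTK _ HT); rewrite inE => /andP [].
Qed.

Lemma nested_incomparable_disjoint G H : G \in S -> H \in S ->
  ~~ (G \subset H) -> ~~ (H \subset G) -> [disjoint G & H].
Proof.
move=> GS HS' GH HG; rewrite -setI_eq0; apply/eqP/setP => x; rewrite !inE.
apply/negP => /andP [xG xH].
set T := [set G; H].
have neGH : G != H by apply: contraNneq GH => ->.
have TS : T \subset S by apply/subsetP => t; rewrite !inE => /orP [] /eqP ->.
have T2 : 1 < #|T| by rewrite cards2 neGH.
have antiT : antichain T.
  by move=> H1 H2; rewrite !inE => /orP [] /eqP -> /orP [] /eqP -> //; rewrite eqxx.
have [K1 K1X GK1] := join_nested_factor_above TS (set21 G H).
have [K2 K2X HK2] := join_nested_factor_above TS (set22 G H).
have neK12 : K1 != K2.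
  apply/eqP => eK12; apply: (factor_join_not_upper TS T2 antiT K1X) => t.
  by rewrite !inE => /orP [] /eqP ->; last rewrite eK12.
have clxK (L K : {set 'I_n}) : x \in L -> L \subset K -> flat B K -> cl B [set x] \subset K.
  by move=> xL LK flatK; apply: (cl_sub_flat HB flatK); rewrite sub1set (subsetP LK).
have flatx := flat_cl HB [set x].
have := single_factor_le (factors_join_iso K1X) K1X flatx (clxK _ _ xG GK1 (factor_flat K1X))
  (single_factor_elt _ flatx (clxK _ _ xH HK2 (factor_flat K2X))).
rewrite join_map_single_factor // ffunE K1X (negbTE neK12) => /(_ (subxx _)) /subsetP x0.
have /nested_loop_setT eT := x0 x (mem_cl1 B x).
by move: GH; rewrite (eT _ GS) (eT _ HS') subxx.
Qed.

Lemma mem_factor X x : flat B X -> x \in X -> x \notin cl B set0 ->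
  exists2 K, K \in factors X & x \in K.
Proof.
move=> flatX xX x0; have [_ onto _] := factors_iso flatX xX.
have xX1 : [set x] \subset X by rewrite sub1set.
have [f hf fx] := onto _ (flat_cl HB [set x]) (cl_sub_flat HB flatX xX1).
have [/exists_inP [K KX /subsetPn [y yfK y0]]|] :=
  boolP [exists K in factors X, ~~ (f K \subset cl B set0)].
  have [flatfK fKK] := (hf K).1 KX; exists K => //; apply: (subsetP fKK).
  have yx : y \in cl B [set x].
    by rewrite -fx; apply: (subsetP (subset_cl B _)); apply/bigcupP; exists K.
  have yfK1 : [set y] \subset f K by rewrite sub1set.
  exact: subsetP (cl_sub_flat HB flatfK yfK1) x (mem_cl1_sym HB yx y0).
rewrite negb_exists_in => /forall_inP fK0; case/negP: x0.
suff /subsetP : cl B [set x] \subset cl B set0 by apply; apply: mem_cl1.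
rewrite -fx; apply: (cl_sub_flat HB (flat_cl HB _)).
by apply/bigcupsP => K KX; apply/negbNE/fK0.
Qed.

Lemma factor_sub_join T K : T \subset S -> K \in factors (join B T) ->
  K \subset join B [set H in T | H \subset K].
Proof.
move=> TS KX; have isoX := factors_join_iso KX; set X := join B T in KX isoX *.
pose g := [ffun K' => if K' \in factors X then join B [set H in T | H \subset K'] else set0].
pose top := [ffun K' => if K' \in factors X then K' else set0].
have hg : prod_elt B (factors X) g.
  move=> K'; rewrite ffunE; split=> [K'X|/negbTE -> //]; rewrite K'X; split.
    exact: flat_cl.
  by apply: (join_sub_flat HB (factor_flat K'X)) => H; rewrite inE => /andP [].
have htop : prod_elt B (factors X) top.
  move=> K'; rewrite ffunE; split=> [K'X|/negbTE -> //].
  by rewrite K'X; split; [apply: factor_flat K'X|].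
have := factors_le isoX htop hg _ KX; rewrite !ffunE KX; apply.
apply: (cl_sub_flat HB (flat_cl HB _)); apply/bigcupsP => K' K'X; rewrite ffunE K'X.
apply: subset_trans (factor_sub K'X) _; apply: (join_sub_flat HB (flat_cl HB _)) => H HT.
have [K'' K''X HK''] := join_nested_factor_above TS HT.
apply: subset_trans (subset_cl B _); apply: subset_trans (bigcup_sup K'' K''X).
by rewrite ffunE K''X; apply: sub_join; rewrite inE HT HK''.
Qed.

Lemma mem_join_nested T x : T \subset S -> antichain T -> x \in join B T ->
  x \notin cl B set0 -> exists2 H, H \in T & x \in H.
Proof.
move: {2}#|T|.+1 (ltnSn #|T|) => k; elim: k T => // k IH T Tk TS antiT xT x0.
have [T1|T2] := leqP #|T| 1.
  have [T0|[H TH]] := card_le1_set T1; first by move: xT; rewrite T0 join_set0 (negbTE x0).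
  have HS' : H \in S by rewrite (subsetP TS) // TH set11.
  by exists H; [rewrite TH set11 | move: xT; rewrite TH join_set1 //; apply: nested_flat].
have [K KX xK] := mem_factor (flat_cl HB _) xT x0.
set TK := [set H in T | H \subset K].
have TKT : TK \subset T by apply/subsetP => H; rewrite inE => /andP [].
have TKk : #|TK| < k := leq_trans (card_factor_lower TS T2 antiT KX) Tk.
have [|H HTK xH] := IH TK TKk (subset_trans TKT TS) (antichainS TKT antiT) _ x0.
  exact: subsetP (factor_sub_join TS KX) x xK.
by exists H => //; apply: (subsetP TKT).
Qed.

Definition lower G := [set H in S | H \proper G].

Lemma lower_sub G : lower G \subset S.
Proof. by apply/subsetP => H; rewrite inE => /andP []. Qed.

Lemma Gminus_join G : lower G != set0 -> Gminus B S G = join B (maxel (lower G)).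
Proof. by rewrite /Gminus -/(lower G) => /negbTE ->. Qed.

Lemma Gminus_set0 G : lower G = set0 -> Gminus B S G = set0.
Proof. by rewrite /Gminus -/(lower G) => ->; rewrite eqxx. Qed.

Lemma Gminus_sub G : G \in S -> Gminus B S G \subset G.
Proof.
move=> GS; have [/Gminus_set0 ->|/Gminus_join ->] := eqVneq (lower G) set0.
  exact: sub0set.
apply: (join_sub_flat HB (nested_flat GS)) => H /(subsetP (maxel_sub _)).
by rewrite inE => /andP [_ /proper_sub].
Qed.

Lemma sub_Gminus G H : H \in S -> H \proper G -> H \subset Gminus B S G.
Proof.
move=> HS' HG; have HP : H \in lower G by rewrite inE HS' HG.
have [K KP HK] := maxel_above HP.
rewrite Gminus_join; last by apply/set0Pn; exists H.
exact: subset_trans HK (sub_join B KP).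
Qed.

Lemma mem_part_sub G H x : G \in S -> H \in S ->
  x \in G :\: Gminus B S G -> x \in H -> G \subset H.
Proof.
move=> GS HS'; rewrite inE => /andP [xGm xG] xH.
have [//|GH] := boolP (G \subset H); have [HG|HG] := boolP (H \subset G).
  by move: xGm; rewrite (subsetP (sub_Gminus HS' _) _ xH) // properE HG GH.
by rewrite (disjointFr (nested_incomparable_disjoint GS HS' GH HG) xG) in xH.
Qed.

Lemma part_disjoint G H : G \in S -> H \in S -> G != H ->
  [disjoint G :\: Gminus B S G & H :\: Gminus B S H].
Proof.
move=> GS HS' neGH; rewrite -setI_eq0; apply/eqP/setP => x; rewrite inE in_set0.
apply/negP => /andP [xG xH].
have GH := mem_part_sub GS HS' xG (subsetP (subsetDl _ _) x xH).
have HG := mem_part_sub HS' GS xH (subsetP (subsetDl _ _) x xG).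
by move: neGH; rewrite eqEsubset GH HG.
Qed.

Lemma part_cover x : setT \in S -> exists2 G, G \in S & x \in G :\: Gminus B S G.
Proof.
move=> TS; have TSx : (setT \in S) && (x \in setT) by rewrite TS inE.
case: (@arg_minnP _ setT (fun G => (G \in S) && (x \in G)) (fun G => #|G|) TSx).
move=> G /andP [GS xG] minG; exists G => //; rewrite inE xG andbT.
have [/Gminus_set0 ->|lowerG] := eqVneq (lower G) set0; first by rewrite inE.
have [x0|x0] := boolP (x \in cl B set0).
  have /set0Pn [H] := lowerG; rewrite inE => /andP [HS'].
  by rewrite (nested_loop_setT x0 HS') (nested_loop_setT x0 GS) properxx.
rewrite Gminus_join //; apply/negP => xGm.
have antiT := @maxel_antichain _ (lower G).
have [H /(subsetP (maxel_sub _))] :=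
  mem_join_nested (subset_trans (maxel_sub _) (lower_sub G)) antiT xGm x0.
rewrite inE => /andP [HS' HG] xH.
by have := minG H; rewrite HS' xH leqNgt (proper_card HG) => /(_ isT).
Qed.

(* The building-set isomorphism confines a dependency of x to the factor
   containing x. *)
Lemma cl_bigcup_factor T (I : {set 'I_n} -> {set 'I_n}) K x : T \subset S ->
  (forall H, H \in T -> I H \subset H) -> K \in factors (join B T) -> x \in K ->
  x \in cl B ((\bigcup_(H in T) I H) :\ x) ->
  x \in cl B ((\bigcup_(H in T | H \subset K) I H) :\ x).
Proof.
move=> TS IT KX xK xcl; have isoX := factors_join_iso KX.
set X := join B T in KX isoX.
pose f := [ffun K' => if K' \in factors X
                      then cl B ((\bigcup_(H in T | H \subset K') I H) :\ x) else set0].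
have hf : prod_elt B (factors X) f.
  move=> K'; rewrite ffunE; split=> [K'X|/negbTE -> //]; rewrite K'X; split.
    exact: flat_cl.
  apply: (cl_sub_flat HB (factor_flat K'X)); apply/subsetP => t.
  rewrite inE => /andP [_ /bigcupP [H /andP [HT HK'] tI]].
  by apply: (subsetP HK'); apply: (subsetP (IT H HT)).
have xK1 : [set x] \subset K by rewrite sub1set.
have xf : [set x] \subset join_map B (factors X) f.
  rewrite sub1set; move: xcl; apply/subsetP; apply: (cl_sub_flat HB (flat_cl HB _)).
  apply/subsetP => t /setD1P [tx /bigcupP [H HT tI]]; rewrite /join_map.
  have [K' K'X HK'] := join_nested_factor_above TS HT.
  apply: (subsetP (subset_cl B _)); apply/bigcupP; exists K' => //; rewrite ffunE K'X.
  apply: (subsetP (subset_cl B _)); apply/setD1P; split=> //.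
  by apply/bigcupP; exists H; rewrite ?HT ?HK'.
have := single_factor_le isoX KX (flat_cl HB [set x])
  (cl_sub_flat HB (factor_flat KX) xK1) hf (cl_sub_flat HB (flat_cl HB _) xf).
by rewrite ffunE KX => /subsetP; apply; apply: mem_cl1.
Qed.

Lemma indep_bigcup_nested T (I : {set 'I_n} -> {set 'I_n}) : T \subset S -> antichain T ->
  (forall H, H \in T -> maxindep B H (I H)) -> indep B (\bigcup_(H in T) I H).
Proof.
move: {2}#|T|.+1 (ltnSn #|T|) => k; elim: k T => // k IH T Tk TS antiT mI.
have IT H : H \in T -> I H \subset H by move/mI => [].
have [T1|T2] := leqP #|T| 1.
  have [T0|[H TH]] := card_le1_set T1; first by rewrite T0 big_set0; apply: indep0.
  have [_ ? _] : maxindep B H (I H) by apply: mI; rewrite TH set11.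
  by rewrite TH big_set1.
apply: (notin_cl_indep HB) => x /bigcupP [H1 H1T xI1]; apply/negP => xcl.
have [K1 K1X H1K1] := join_nested_factor_above TS H1T.
set TK := [set H in T | H \subset K1].
have TKT : TK \subset T by apply/subsetP => H; rewrite inE => /andP [].
have indepTK := IH TK (leq_trans (card_factor_lower TS T2 antiT K1X) Tk)
  (subset_trans TKT TS) (antichainS TKT antiT) (fun H HTK => mI H (subsetP TKT H HTK)).
have xTK : x \in \bigcup_(H in TK) I H by apply/bigcupP; exists H1; rewrite // inE H1T H1K1.
have /negP := indep_notin_cl HB indepTK xTK; apply.
have -> : \bigcup_(H in TK) I H = \bigcup_(H in T | H \subset K1) I H.
  by apply: eq_bigl => H; rewrite inE.
exact: cl_bigcup_factor K1X (subsetP H1K1 x (subsetP (IT H1 H1T) x xI1)) xcl.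
Qed.

Lemma maxindep_join_nested T (I : {set 'I_n} -> {set 'I_n}) : T \subset S -> antichain T ->
  (forall H, H \in T -> maxindep B H (I H)) -> maxindep B (join B T) (\bigcup_(H in T) I H).
Proof.
move=> TS antiT mI; apply: (maxindep_of_spans HB).
- apply/bigcupsP => H HT; have [IH _ _] := mI H HT; exact: subset_trans IH (sub_join B HT).
- exact: indep_bigcup_nested.
apply: (join_sub_flat HB (flat_cl HB _)) => H HT.
by apply: subset_trans (maxindep_spans HB (mI H HT)) _; apply: clS => //; apply: bigcup_sup HT.
Qed.

Lemma maxindep_Gminus G b : G \in S -> (forall H, H \in lower G -> maxindep B H (b :&: H)) ->
  maxindep B (Gminus B S G) (\bigcup_(H in lower G) (b :&: H)).
Proof.
move=> GS mb; have [lower0|lowerG] := eqVneq (lower G) set0.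
  by rewrite Gminus_set0 // lower0 big_set0; apply: maxindep_id (indep0 HB).
rewrite Gminus_join //.
have -> : \bigcup_(H in lower G) (b :&: H) = \bigcup_(H in maxel (lower G)) (b :&: H).
  apply/eqP; rewrite eqEsubset; apply/andP; split; apply/bigcupsP => H HP.
    by have [K KT HK] := maxel_above HP; apply: subset_trans (bigcup_sup K KT); apply: setIS.
  exact: bigcup_sup (subsetP (maxel_sub _) H HP).
apply: maxindep_join_nested; first exact: subset_trans (maxel_sub _) (lower_sub G).
  exact: maxel_antichain.
by move=> H /(subsetP (maxel_sub _)); apply: mb.
Qed.

Lemma bigcup_part : setT \in S -> \bigcup_(G in S) (G :\: Gminus B S G) = setT.
Proof.
move=> TS; apply/eqP; rewrite eqEsubset subsetT; apply/subsetP => x _.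
by have [G GS xG] := part_cover x TS; apply/bigcupP; exists G.
Qed.

Section MinorBasesUnion.
Variable f : {ffun {set 'I_n} -> {set 'I_n}}.
Hypothesis minor_f : forall G, G \in S -> minor_bases B (Gminus B S G) G (f G).
Let b := \bigcup_(G in S) f G.

Lemma minor_union_cases G x : G \in S -> x \in b -> x \in G ->
  x \in f G \/ exists2 H, H \in lower G & x \in H.
Proof.
move=> GS /bigcupP [H HS' xfH] xG.
have xpartH := subsetP (minor_bases_sub (minor_f HS')) x xfH.
have HG := mem_part_sub HS' GS xpartH xG.
have [eHG|neHG] := eqVneq H G; first by left; rewrite -eHG.
by right; exists H; [rewrite inE HS' properEneq neHG | move: xpartH; rewrite inE => /andP []].
Qed.

Lemma minor_union_setI G : G \in S -> b :&: G = (b :&: Gminus B S G) :|: f G.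
Proof.
move=> GS; apply/eqP; rewrite eqEsubset; apply/andP; split; apply/subsetP => x.
  rewrite inE => /andP [xb xG]; rewrite !inE xb /=.
  have [->|[H HG xH]] := minor_union_cases GS xb xG; first by rewrite orbT.
  by move: HG; rewrite inE => /andP [HS' HG]; rewrite (subsetP (sub_Gminus HS' HG)).
rewrite !inE => /orP [/andP [xb xGm]|xfG]; first by rewrite xb (subsetP (Gminus_sub GS)).
have := subsetP (minor_bases_sub (minor_f GS)) x xfG; rewrite inE => /andP [_ ->].
by rewrite andbT; apply/bigcupP; exists G.
Qed.

Lemma minor_union_setI_Gminus G : G \in S ->
  b :&: Gminus B S G = \bigcup_(H in lower G) (b :&: H).
Proof.
move=> GS; apply/eqP; rewrite eqEsubset; apply/andP; split; last first.
  apply/bigcupsP => H; rewrite inE => /andP [HS' HG]; exact: setIS (sub_Gminus HS' HG).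
apply/subsetP => x; rewrite inE => /andP [xb xGm].
have [xfG|[H HG xH]] := minor_union_cases GS xb (subsetP (Gminus_sub GS) x xGm).
  by have := subsetP (minor_bases_sub (minor_f GS)) x xfG; rewrite inE xGm.
by apply/bigcupP; exists H; rewrite // inE xb.
Qed.

Lemma minor_union_maxindep G : G \in S -> maxindep B G (b :&: G).
Proof.
move: {2}#|G|.+1 (ltnSn #|G|) => k; elim: k G => // k IH G Gk GS.
rewrite minor_union_setI //; apply: (maxindep_minor_union HB (Gminus_sub GS)) (minor_f GS).
rewrite minor_union_setI_Gminus //; apply: maxindep_Gminus => // H.
by rewrite inE => /andP [HS' HG]; apply: IH HS'; apply: leq_trans (proper_card HG) Gk.
Qed.
End MinorBasesUnion.

Hypothesis TS : setT \in S.

Lemma minor_union_adapted (f : {ffun {set 'I_n} -> {set 'I_n}}) :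
  (forall G, G \in S -> minor_bases B (Gminus B S G) G (f G)) ->
  adapted_basis B S (\bigcup_(G in S) f G).
Proof.
move=> minor_f; split=> [|G GS]; last exact: (card_maxindep HB (minor_union_maxindep minor_f GS)).
by apply: (maxindep_setT_base HB); rewrite -[X in maxindep _ _ X]setIT; apply: minor_union_maxindep.
Qed.

Lemma adapted_minor_bases b G : adapted_basis B S b -> G \in S ->
  minor_bases B (Gminus B S G) G ((b :&: G) :\: Gminus B S G).
Proof.
move=> [bB cardb] GS.
have mb H : H \in S -> maxindep B H (b :&: H).
  move=> HS'; apply: maxindep_card (subsetIr _ _) _ (cardb H HS') => //.
  exact: indepS (base_indep bB) (subsetIl _ _).
apply: minor_bases_maxindep; first exact: mb.
rewrite -setIA (setIidPr (Gminus_sub GS)).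
have mU := maxindep_Gminus GS (fun H HG => mb H (subsetP (lower_sub G) H HG)).
have UbGm : \bigcup_(H in lower G) (b :&: H) \subset b :&: Gminus B S G.
  by apply/bigcupsP => H; rewrite inE => /andP [HS' HG]; apply: setIS (sub_Gminus HS' HG).
have /(maxindepP B) [_ _ maxU] := mU.
by rewrite (maxU _ UbGm (subsetIr _ _) (indepS (base_indep bB) (subsetIl _ _))).
Qed.

Lemma adapted_basisP b : adapted_basis B S b <->
  exists2 f : {ffun {set 'I_n} -> {set 'I_n}},
    (forall G, G \in S -> minor_bases B (Gminus B S G) G (f G)) & b = \bigcup_(G in S) f G.
Proof.
split=> [adb|[f minor_f ->]]; last exact: minor_union_adapted.
exists [ffun G => (b :&: G) :\: Gminus B S G] => [G GS|].
  by rewrite ffunE; apply: adapted_minor_bases.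
apply/eqP; rewrite eqEsubset; apply/andP; split; apply/subsetP => x.
  move=> xb; have [G GS xG] := part_cover x TS; apply/bigcupP; exists G; rewrite // ffunE.
  by move: xG; rewrite !inE xb.
by case/bigcupP => G _; rewrite ffunE !inE => /andP [_ /andP [] ].
Qed.

Lemma adapted_basis_exists : exists b, adapted_basis B S b.
Proof.
have hex G : exists t, G \in S -> minor_bases B (Gminus B S G) G t.
  have [GS|_] := boolP (G \in S); last by exists set0.
  by have [t ?] := maxindep_exists_minor HB (Gminus_sub GS); exists t.
have [f0 minor_f0] := fin_all_exists hex.
exists (\bigcup_(G in S) [ffun G => f0 G] G).
by apply: minor_union_adapted => G GS; rewrite ffunE; apply: minor_f0.
Qed.
End NestedSet.

Section Weights.
Variables (R : realType) (n : nat) (B S : {set {set 'I_n}}).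
Local Open Scope ring_scope.
Implicit Types (C G : {set 'I_n}) (lam : {ffun {set 'I_n} -> R}).

Lemma wsumD (u v : 'rV[R]_n) C : wsum (u + v) C = wsum u C + wsum v C.
Proof. by rewrite /wsum -big_split; apply: eq_bigr => i _; rewrite mxE. Qed.

Lemma sum_mem_card C G : \sum_(i in C) ((i \in G)%:R : R) = #|C :&: G|%:R.
Proof.
rewrite -sum1_card natr_sum (eq_bigl (fun i => (i \in C) && (i \in G))) => [|i]; last first.
  by rewrite inE.
by rewrite big_mkcondr; apply: eq_bigr => i _; case: (i \in G).
Qed.

Lemma wsumZ_incv (d : R) G C : wsum (d *: incv R G) C = d * #|C :&: G|%:R.
Proof. by rewrite /wsum -sum_mem_card mulr_sumr; apply: eq_bigr => i _; rewrite !mxE. Qed.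

Lemma wsum_cone lam C :
  wsum (\sum_(G in S) lam G *: incv R G) C = \sum_(G in S) lam G * #|C :&: G|%:R.
Proof.
rewrite /wsum; under eq_bigr do rewrite summxE.
by rewrite exchange_big; apply: eq_bigr => G _; rewrite -wsumZ_incv.
Qed.

Lemma wsum_cone_le_rk lam C : (forall G, G \in S -> 0 <= lam G) -> C \in B ->
  wsum (\sum_(G in S) lam G *: incv R G) C <= \sum_(G in S) lam G * (rk B G)%:R.
Proof.
move=> lam0 CB; rewrite wsum_cone; apply: ler_sum => G GS.
by rewrite ler_wpM2l ?lam0 // ler_nat setIC leq_card_rk.
Qed.

Lemma wsum_cone_adapted lam b : adapted_basis B S b ->
  wsum (\sum_(G in S) lam G *: incv R G) b = \sum_(G in S) lam G * (rk B G)%:R.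
Proof. by case=> _ cardb; rewrite wsum_cone; apply: eq_bigr => G GS; rewrite cardb. Qed.

(* [w - d v_G0] is an affine combination of [w] and [w + d v_G0], which lie in
   the cone, and it is close to [w]. *)
Lemma relint_cone_incv (w : 'rV[R]_n) G0 : in_relint (in_cone S) w -> G0 \in S ->
  exists2 d : R, 0 < d & in_cone S (w - d *: incv R G0).
Proof.
case=> -[lam [lam0 ew]] [eps eps0 relw] G0S.
set d := eps / 2; have d0 : 0 < d by rewrite divr_gt0.
exists d => //; apply: relw; last first.
  move=> i; rewrite !mxE addrAC subrr add0r normrN.
  by case: (i \in G0); rewrite ?mulr1 ?mulr0 ?normr0 // gtr0_norm //; rewrite /d; lra.
have inc : in_cone S (w + d *: incv R G0).
  exists [ffun G => lam G + (G == G0)%:R * d]; split=> [G GS|].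
    by rewrite ffunE; apply: addr_ge0; [apply: lam0 | apply: mulr_ge0; [apply: ler0n | apply: ltW]].
  rewrite ew; under [RHS]eq_bigr do rewrite ffunE scalerDl.
  rewrite big_split /=; congr (_ + _).
  rewrite (bigD1 G0) //= eqxx mul1r big1 ?addr0 // => G /andP [_ /negbTE ->].
  by rewrite mul0r scale0r.
exists 2, (fun j : 'I_2 => if j == ord0 then w else w + d *: incv R G0),
  (fun j : 'I_2 => if j == ord0 then 2 else -1); split.
- by move=> j; case: (j == ord0) => //; exists lam.
- by rewrite !big_ord_recl big_ord0 /=; lra.
by rewrite !big_ord_recl big_ord0 /= addr0 scaleN1r scaler_nat mulr2n opprD addrA addrK.
Qed.

Lemma Mw_bases_adapted (w : 'rV[R]_n) b0 : in_relint (in_cone S) w -> adapted_basis B S b0 ->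
  forall b, Mw_bases B w b <-> adapted_basis B S b.
Proof.
move=> relw adb0 b; have [[lam [lam0 ew]] _] := relw; split=> [[bB maxb]|adb].
  split=> // G0 G0S; apply/eqP; rewrite eqn_leq [in X in X && _]setIC leq_card_rk //=.
  have [d d0 [mu [mu0 emu]]] := relint_cone_incv relw G0S.
  have ew' : w = \sum_(G in S) mu G *: incv R G + d *: incv R G0 by rewrite -emu subrK.
  have := maxb b0 (proj1 adb0); rewrite ew' !wsumD !wsumZ_incv wsum_cone_adapted //.
  rewrite (proj2 adb0) // => le_b0b; have le_b := wsum_cone_le_rk mu0 bB.
  rewrite -(ler_nat R) -(ler_pM2l d0) -(lerD2l (\sum_(G in S) mu G * (rk B G)%:R)).
  by apply: le_trans le_b0b _; rewrite lerD2r.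
split=> [|C CB]; first by case: adb.
by rewrite ew (wsum_cone_adapted lam adb); exact: (wsum_cone_le_rk lam0 CB).
Qed.
End Weights.

Theorem theorem4p4 (R : realType) (n : nat) (B : {set {set 'I_n}})
    (Gs S : {set {set 'I_n}}) (w : 'rV[R]_n) :
  is_matroid B -> connected B ->
  building_set B Gs -> nested B Gs S -> [set: 'I_n] \in S ->
  in_relint (in_cone S) w ->
  [/\ (forall G H, G \in S -> H \in S -> G != H ->
         [disjoint G :\: Gminus B S G & H :\: Gminus B S H]),
      \bigcup_(G in S) (G :\: Gminus B S G) = [set: 'I_n]
    & forall b : {set 'I_n}, Mw_bases B w b <->
        exists2 f : {ffun {set 'I_n} -> {set 'I_n}},
          (forall G, G \in S -> minor_bases B (Gminus B S G) G (f G))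
          & b = \bigcup_(G in S) f G].
Proof.
move=> HB conB HGs HS TS relw.
split; first exact: (@part_disjoint _ _ _ _ HB conB HGs HS).
  exact: (bigcup_part HB conB HGs HS TS).
move=> b; have [b0 adb0] := adapted_basis_exists HB conB HGs HS TS.
rewrite (Mw_bases_adapted relw adb0); exact: (adapted_basisP HB conB HGs HS TS).
Qed.
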